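(* Let $r,t\ge 2$, let $Wd(r,t)$ be the windmill graph, $n=t(r-1)+1$ its order, and $k$ an integer with $2\le k\le n$. Then $$SW_k(Wd(r,t))=(n-1)\binom{n-1}{k-1}-t\binom{r-1}{k}.$$
   Context: The windmill graph $Wd(r,t)$ is obtained by taking $t$ copies of the complete graph $K_r$ and identifying one vertex from each copy into a single shared vertex. For $S\subseteq V(G)$, the Steiner distance $d(S)$ is the minimum number of edges of a connected subgraph whose vertex set contains $S$, and $SW_k(G)=\sum_{|S|=k} d(S)$. Convention $\binom{m}{l}=0$ for $m<l$. *)

From mathcomp Require Import all_boot.
Set Implicit Arguments. Unset Strict Implicit. Unset Printing Implicit Defensive.

(* A simple graph is given by a vertex finType T and an adjacency relation
   adj (assumed symmetric and irreflexive by the concrete instances). *)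
Definition graph_edges (T : finType) (adj : rel T) : {set {set T}} :=
  [set e : {set T} | [exists x : T, exists y : T, adj x y && (e == [set x; y])]].

Definition steiner_ok (T : finType) (adj : rel T) (S : {set T})
    (VF : {set T} * {set {set T}}) : bool :=
  [&& VF.2 \subset graph_edges adj,
      [forall e in VF.2, e \subset VF.1],
      S \subset VF.1 &
      [forall x in VF.1, forall y in VF.1,
          connect [rel a b | [set a; b] \in VF.2] x y]].

(* Steiner distance d(S): minimum number of edges of a connected subgraph
   whose vertex set contains S. (The neutral value #|{set T}| only matters
   if no such subgraph exists, which never happens for connected graphs.) *)
Definition steiner_dist (T : finType) (adj : rel T) (S : {set T}) : nat :=
  \big[minn/#|{: {set T}}|]_(VF : {set T} * {set {set T}} | steiner_ok adj S VF)
     #|VF.2|.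

Definition steiner_wiener (T : finType) (adj : rel T) (k : nat) : nat :=
  \sum_(S : {set T} | #|S| == k) steiner_dist adj S.

(* Windmill graph Wd(r,t): vertices are None (the shared centre) and
   Some (i, j) = the j-th non-central vertex of the i-th copy of K_r
   (i < t, j < r - 1). *)
Definition wd_vertex (r t : nat) : finType := option ('I_t * 'I_(r.-1)).

Definition wd_adj (r t : nat) : rel (wd_vertex r t) :=
  fun x y =>
    match x, y with
    | None, None => false
    | None, Some _ => true
    | Some _, None => true
    | Some p, Some q => (p.1 == q.1) && (p.2 != q.2)
    end.

From mathcomp Require Import all_boot zify.

(* A connected subgraph spanning a vertex set U has at least |U| - 1 edges, so
   d(S) >= |S| - 1, with equality as soon as some vertex of S is adjacent to
   all the others (a star). In Wd(r,t) this happens when S contains the centre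
   or lies in one copy of K_r; otherwise S is spread over several copies and a
   connected subgraph containing it must use the centre, so d(S) = |S|.  Hence
   d(S) = |S| - [centre in S] - [S inside one copy], and summing over the
   k-subsets gives k C(n,k) - C(n-1,k-1) - t C(r-1,k), which is the claimed
   value since k C(n,k) = n C(n-1,k-1). *)

Set Implicit Arguments.
Unset Strict Implicit.
Unset Printing Implicit Defensive.

Section SpanningBound.
Variables (T : finType) (F : {set {set T}}) (x0 : T).
Local Notation edge := [rel a b : T | [set a; b] \in F].

Let walk y n := [exists p : n.-tuple T, path edge x0 p && (last x0 p == y)].

Let walk_exists y : exists n, connect edge x0 y ==> walk y n.
Proof.
case: (boolP (connect edge x0 y)) => [/connectP[p pp ->] | _]; last by exists 0.
by exists (size p); apply/existsP; exists (in_tuple p); rewrite /= pp eqxx.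
Qed.

Let dist y := ex_minn (walk_exists y).

Let dist_walk y : connect edge x0 y -> walk y (dist y).
Proof. by move=> x0y; rewrite /dist; case: ex_minnP => n; rewrite x0y. Qed.

Let dist_min y n : walk y n -> dist y <= n.
Proof. by move=> wn; rewrite /dist; case: ex_minnP => m _; apply; rewrite wn implybT. Qed.

Let parent_edge y : connect edge x0 y -> y != x0 ->
  exists2 u, [set u; y] \in F & dist u < dist y.
Proof.
move=> x0y ny; have /existsP[[p /= /eqP sz_p] /andP[pp /eqP py]] := dist_walk x0y.
case/lastP: p sz_p pp py => [|p z] sz_p; first by move=> _ y0; rewrite -y0 eqxx in ny.
rewrite rcons_path last_rcons => /andP[pp pz] zy; subst z.
exists (last x0 p) => //; rewrite -sz_p size_rcons ltnS.
by apply: dist_min; apply/existsP; exists (in_tuple p); rewrite /= pp eqxx.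
Qed.

(* Each vertex y other than x0 is sent to the edge joining it to a vertex
   strictly closer to x0; two vertices sharing that edge would each be
   closer than the other. *)
Lemma card_connected_le (V : {set T}) :
  x0 \in V -> {in V, forall y, connect edge x0 y} -> #|V| <= #|F|.+1.
Proof.
move=> x0V connV.
pose down y := odflt set0
  [pick e in F | [exists u, (e == [set u; y]) && (dist u < dist y)]].
have downP y : y \in V :\ x0 ->
    exists2 u, down y = [set u; y] & (dist u < dist y) && (down y \in F).
  rewrite in_setD1 => /andP[ny yV]; rewrite /down.
  case: pickP => [e /andP[eF /existsP[u /andP[/eqP e_uy du]]] | none] /=.
    by subst e; exists u; rewrite ?du.
  have [u uy du] := parent_edge (connV y yV) ny.
  by have := none [set u; y]; rewrite uy; case: existsP => // -[]; exists u; rewrite eqxx.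
have down_inj : {in V :\ x0 &, injective down}.
  move=> y y' /downP[u dy /andP[du _]] /downP[u' dy' /andP[du' _]] eq_d.
  case: (eqVneq y y') => // neq.
  have /set2P[yu'|yy'] : y \in [set u'; y'] by rewrite -dy' -eq_d dy set22.
    have /set2P[y'u|y'y] : y' \in [set u; y] by rewrite -dy eq_d dy' set22.
      by subst u u'; rewrite ltnNge ltnW in du.
    by rewrite y'y eqxx in neq.
  by rewrite yy' eqxx in neq.
have sub_F : down @: (V :\ x0) \subset F.
  by apply/subsetP => _ /imsetP[y /downP[u _ /andP[_ dF]] ->].
by have := subset_leq_card sub_F; rewrite card_in_imset // (cardsD1 x0 V) x0V.
Qed.

End SpanningBound.

Section SteinerDistance.
Variables (T : finType) (adj : rel T).
Implicit Types S : {set T}.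

Lemma geq_big_minn (I : finType) (P : pred I) (F : I -> nat) idx i :
  P i -> \big[minn/idx]_(j | P j) F j <= F i.
Proof.
move=> Pi; elim: (index_enum I) (mem_index_enum i) => // j s IHs.
rewrite inE big_cons => /predU1P[<- | /IHs le_i]; first by rewrite Pi geq_minl.
by case: (P j); rewrite ?geq_min ?le_i ?orbT.
Qed.

Lemma steiner_dist_le S VF : steiner_ok adj S VF -> steiner_dist adj S <= #|VF.2|.
Proof. exact: geq_big_minn. Qed.

Lemma steiner_distE S VF0 :
  steiner_ok adj S VF0 -> (forall VF, steiner_ok adj S VF -> #|VF0.2| <= #|VF.2|) ->
  steiner_dist adj S = #|VF0.2|.
Proof.
move=> ok0 min0; apply/eqP; rewrite eqn_leq steiner_dist_le //=.
by apply: (big_ind (leq #|VF0.2|)) => [|a b ha hb|]; rewrite ?leq_min ?ha ?hb ?max_card.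
Qed.

Lemma steiner_ok_card S VF : steiner_ok adj S VF -> #|VF.1| <= #|VF.2|.+1.
Proof.
case: VF => V F /and4P[_ _ _ /forallP connV] /=.
have [-> | [x0 x0V]] := set_0Vmem V; first by rewrite cards0.
apply: (card_connected_le x0V) => y yV.
by have /forallP/(_ y) := implyP (connV x0) x0V; rewrite yV.
Qed.

Lemma card_star (c : T) (A : {set T}) :
  c \notin A -> #|[set [set c; z] | z in A]| = #|A|.
Proof.
move=> cA; rewrite card_in_imset // => z z' zA _ e_zz'.
have /set2P[zc|//] : z \in [set c; z'] by rewrite -e_zz' set22.
by rewrite -zc zA in cA.
Qed.

Lemma steiner_ok_star S (c : T) (A : {set T}) :
  S \subset c |: A -> {in A, forall z, adj c z} ->
  steiner_ok adj S (c |: A, [set [set c; z] | z in A]).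
Proof.
move=> SV adjA; apply/and4P; split => //=.
- apply/subsetP => _ /imsetP[z zA ->]; rewrite inE.
  by apply/existsP; exists c; apply/existsP; exists z; rewrite adjA ?eqxx.
- apply/'forall_implyP => _ /imsetP[z zA ->].
  by rewrite subUset sub1set setU11 sub1set setU1r.
pose star := [rel a b | [set a; b] \in [set [set c; z] | z in A]].
have spoke z : z \in c |: A -> connect star c z && connect star z c.
  case/setU1P => [-> | zA]; first by rewrite connect0.
  by rewrite !connect1 //= ?[[set z; c]]setUC; apply: imset_f.
apply/'forall_implyP => x /spoke/andP[_ xc]; apply/'forall_implyP => y /spoke/andP[cy _].
exact: connect_trans xc cy.
Qed.

Lemma steiner_dist_star S (c : T) :
  c \in S -> {in S :\ c, forall z, adj c z} -> steiner_dist adj S = #|S|.-1.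
Proof.
move=> cS adj_c; have S_star : S \subset c |: (S :\ c) by rewrite setD1K.
have card_S : #|S| = #|S :\ c|.+1 by rewrite (cardsD1 c S) cS.
rewrite (steiner_distE (steiner_ok_star S_star adj_c)) /= card_star ?setD11 ?card_S //.
move=> VF ok; rewrite -ltnS -card_S.
by apply: leq_trans (steiner_ok_card ok); apply: subset_leq_card; case/and4P: ok.
Qed.

End SteinerDistance.

Section Windmill.
Variables r t : nat.
Local Notation V := (wd_vertex r t).
Local Notation adj := (@wd_adj r t).
Implicit Types S : {set V}.

Definition wd_copy (x : V) : option 'I_t := if x is Some p then Some p.1 else None.

Definition wd_blade (i : 'I_t) : {set V} := [set x | wd_copy x == Some i].

Lemma card_wd_vertex : #|V| = t * (r - 1) + 1.
Proof. by rewrite card_option card_prod !card_ord subn1 addn1. Qed.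

Lemma card_wd_blade i : #|wd_blade i| = r - 1.
Proof.
have -> : wd_blade i = [set Some (i, j) | j : 'I_r.-1].
  apply/setP => -[[i' j]|]; rewrite !inE /=; last by apply/esym/imsetP => -[].
  apply/eqP/imsetP => [[->] | [j' _ [-> _]] //]; by exists j.
by rewrite card_imset ?card_ord ?subn1 // => j j' [].
Qed.

Lemma wd_blades_disjoint i j : i != j -> [disjoint wd_blade i & wd_blade j].
Proof.
move=> ij; apply/pred0P => x /=; rewrite !inE.
by apply: contraNF ij => /andP[/eqP-> /eqP[->]].
Qed.

Lemma wd_adj_blade i : {in wd_blade i &, forall x y, x != y -> adj x y}.
Proof.
move=> [[a b]|] [[c d]|]; rewrite !inE //= => /eqP[->] /eqP[->] ne.
by rewrite eqxx; apply: contraNneq ne => ->.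
Qed.

Lemma wd_adj_copy x y : adj x y -> x != None -> y != None -> wd_copy x = wd_copy y.
Proof. by move: x y => [[a b]|] [[c d]|] //= /andP[/eqP-> _]. Qed.

Lemma wd_edge_copy a b : [set a; b] \in graph_edges adj ->
  a != None -> b != None -> wd_copy a = wd_copy b.
Proof.
rewrite inE => /existsP[u /existsP[v /andP[uv /eqP e_ab]]] aN bN.
have off z : z \in [set u; v] -> z != None by rewrite -e_ab => /set2P[]->.
have copy_uv z : z \in [set u; v] -> wd_copy z = wd_copy u.
  by case/set2P => -> //; apply/esym/wd_adj_copy; rewrite ?off ?set21 ?set22.
by rewrite !copy_uv -?e_ab ?set21 ?set22.
Qed.

Lemma steiner_ok_off_centre S VF : steiner_ok adj S VF -> None \notin VF.1 ->
  {in S &, forall x y, wd_copy x = wd_copy y}.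
Proof.
case: VF => U F /and4P[/subsetP FE /forallP FU /subsetP SU /forallP connU] /= nU.
have offU z : z \in U -> z != None by move=> zU; apply: contraTneq zU => ->.
have edge_copy a b : [set a; b] \in F -> wd_copy a = wd_copy b.
  move=> abF; have /subsetP abU := implyP (FU _) abF.
  by apply: wd_edge_copy (FE _ abF) _ _; apply/offU/abU; rewrite ?set21 ?set22.
move=> x y xS yS.
have /forallP/(_ y) := implyP (connU x) (SU x xS); rewrite (SU y yS) /= => xy.
have closed_copy : closed [rel a b | [set a; b] \in F] [pred z | wd_copy z == wd_copy x].
  by move=> a b /edge_copy; rewrite !inE => ->.
by have := closed_connect closed_copy xy; rewrite !inE eqxx => /esym/eqP.
Qed.

Lemma steiner_dist_wd_centre S : None \in S -> steiner_dist adj S = #|S|.-1.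
Proof. by move=> NS; apply: steiner_dist_star NS _ => -[p|]; rewrite ?setD11. Qed.

Lemma steiner_dist_wd_blade i S :
  S \subset wd_blade i -> S != set0 -> steiner_dist adj S = #|S|.-1.
Proof.
move=> /subsetP Si /set0Pn[c cS]; apply: steiner_dist_star (cS) _ => z.
by rewrite in_setD1 => /andP[zc zS]; apply: (wd_adj_blade (i := i)); rewrite ?Si // eq_sym.
Qed.

Lemma steiner_dist_wd_spread S :
  None \notin S -> ~~ [exists i, S \subset wd_blade i] -> steiner_dist adj S = #|S|.
Proof.
move=> NS spread; have S_star : S \subset None |: S by apply: subsetUr.
have adj_None : {in S, forall z, adj None z} by move=> -[p|] // NS'; rewrite NS' in NS.
have star_ok := steiner_ok_star S_star adj_None.
rewrite (steiner_distE star_ok) /= card_star // => VF ok.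
have [NU | NU] := boolP (None \in VF.1).
  rewrite -ltnS; apply: leq_trans (steiner_ok_card ok).
  have SU : None |: S \subset VF.1 by rewrite subUset sub1set NU; case/and4P: ok.
  by have := subset_leq_card SU; rewrite cardsU1 NS.
have [-> | [c cS]] := set_0Vmem S; first by rewrite cards0.
case: c cS => [[i j]|] cS; last by rewrite cS in NS.
case/existsP: spread; exists i; apply/subsetP => x xS.
by rewrite inE (steiner_ok_off_centre ok NU xS cS).
Qed.

Lemma steiner_dist_wd S : S != set0 ->
  steiner_dist adj S + (None \in S) + [exists i, S \subset wd_blade i] = #|S|.
Proof.
move=> S0; have S_gt0 : 0 < #|S| by rewrite card_gt0.
have [NS | NS] := boolP (None \in S).
  have -> : [exists i, S \subset wd_blade i] = false.
    by apply/existsP => -[i /subsetP/(_ _ NS)]; rewrite inE.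
  by rewrite steiner_dist_wd_centre //= addn1 addn0 prednK.
have [/existsP[i Si] | spread] := boolP [exists i, S \subset wd_blade i].
  by rewrite (steiner_dist_wd_blade Si) //= addn0 addn1 prednK.
by rewrite steiner_dist_wd_spread //= !addn0.
Qed.

End Windmill.

Lemma sum_nat_indicator (I : finType) (P Q : pred I) :
  \sum_(i | P i) (Q i : nat) = #|[set i | P i && Q i]|.
Proof.
rewrite (eq_bigr (fun i => if Q i then 1 else 0)) => [|i _]; last by case: (Q i).
by rewrite -big_mkcondr -sum1_card; apply: eq_bigl => i; rewrite inE.
Qed.

Section Counting.
Variable T : finType.

Lemma sum_draws_mem (x : T) k :
  \sum_(S : {set T} | #|S| == k.+1) (x \in S) = 'C(#|T|.-1, k).
Proof.
have avoid : #|[set S : {set T} | (#|S| == k.+1) && (x \notin S)]| = 'C(#|T|.-1, k.+1).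
  rewrite -(cardsC1 x) -cards_draws; apply: eq_card => S.
  by rewrite !inE subsetC sub1set inE andbC.
have card_T : #|T| = (#|T|.-1).+1 by apply/esym/prednK/card_gt0P; exists x.
apply/(@addIn 'C(#|T|.-1, k.+1)); rewrite [RHS]addnC -binS -card_T -card_draws -avoid.
rewrite sum_nat_indicator -[RHS](cardsID [set S : {set T} | x \in S]); congr (_ + _);
  by apply: eq_card => S; rewrite !inE // andbC.
Qed.

Lemma sum_draws_in_block (I : finType) (B : I -> {set T}) k :
  0 < k -> (forall i j, i != j -> [disjoint B i & B j]) ->
  \sum_(S : {set T} | #|S| == k) [exists i, S \subset B i] = \sum_i 'C(#|B i|, k).
Proof.
move=> k_gt0 disjB.
have one_block (S : {set T}) : #|S| == k -> [exists i, S \subset B i] = \sum_i (S \subset B i) :> nat.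
  move=> /eqP cardS; case: existsP => [[i Si] | none]; last first.
    by rewrite big1 // => i _; apply/eqP; rewrite eqb0; apply/negP => Si; apply: none; exists i.
  rewrite (bigD1 i) //= Si big1 // => j ji; apply/eqP; rewrite eqb0.
  have /set0Pn[s sS] : S != set0 by rewrite -card_gt0 cardS.
  apply: contraTN (disjB _ _ ji) => Sj; apply/pred0Pn; exists s.
  by rewrite /= (subsetP Sj) ?(subsetP Si).
rewrite (eq_bigr _ one_block) exchange_big; apply: eq_bigr => i _.
by rewrite sum_nat_indicator -cards_draws; apply: eq_card => S; rewrite !inE andbC.
Qed.

End Counting.

Lemma steiner_wiener_wd r t k :
  steiner_wiener (@wd_adj r t) k.+1 + 'C(t * (r - 1), k) + t * 'C(r - 1, k.+1) =
  k.+1 * 'C(t * (r - 1) + 1, k.+1).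
Proof.
pose V := wd_vertex r t.
have S0 (S : {set V}) : #|S| == k.+1 -> S != set0.
  by rewrite -card_gt0 => /eqP->.
have -> : k.+1 * 'C(t * (r - 1) + 1, k.+1) = \sum_(S : {set V} | #|S| == k.+1) #|S|.
  rewrite (eq_bigr (fun=> k.+1)) => [|S /eqP //].
  by rewrite sum_nat_const -cardsE card_draws card_wd_vertex mulnC.
rewrite -(eq_bigr _ (fun S hS => steiner_dist_wd (S0 S hS))) !big_split /=.
congr (_ + _ + _).
  by rewrite sum_draws_mem card_wd_vertex addn1.
rewrite (sum_draws_in_block _ (@wd_blades_disjoint r t)) //.
by under eq_bigr => i _ do rewrite card_wd_blade; rewrite sum_nat_const card_ord.
Qed.

Theorem mainTheorem7 (r t k : nat) :
  2 <= r -> 2 <= t ->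
  2 <= k <= t * (r - 1) + 1 ->
  steiner_wiener (@wd_adj r t) k =
    (t * (r - 1) + 1 - 1) * 'C(t * (r - 1) + 1 - 1, k - 1) - t * 'C(r - 1, k).
Proof.
move=> _ _ /andP[k_gt1 _]; case: k k_gt1 => // k _.
have := steiner_wiener_wd r t k; rewrite addnK subSS subn0 addn1 -mul_bin_diag /= mulSn.
lia.
Qed.
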